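(* Let $k\ge0$, $n\ge k+4$ and let $Z$ be a positive $n\times(k+4)$ matrix. Then there is an open neighborhood $B\subset\mathrm{Gr}_{k,n;1}$ of $\mathrm{Gr}^{\ge}_{k,n;1}$ such that the formula $(U,W)\mapsto(UZ,WZ)$ defines a smooth submersion $B\to\mathrm{Gr}_{k,k+4;1}$, extending the amplituhedron map on $\mathrm{Gr}^{\ge}_{k,n;1}$.
   Context: For $m\ge k+2$, $\mathrm{Gr}_{k,m;1}$ denotes the two-step flag variety of pairs $(U,W)$ of subspaces $U\subset W\subset\mathbb{R}^m$ with $\dim U=k$, $\dim W=k+2$. A representative of $(U,W)\in\mathrm{Gr}_{k,n;1}$ is a pair $(C;D)$ with $C$ a $k\times n$ matrix with row span $U$ and $D$ a $2\times n$ matrix such that rows of $C$ and $D$ together span $W$; $[D;C]$ is the $(k+2)\times n$ matrix with the rows of $D$ above those of $C$. $\mathrm{Gr}^{\ge}_{k,n;1}$ is the set of $(U,W)$ having a representative with all maximal minors of $C$ and of $[D;C]$ nonnegative. $Z$ positive means all maximal minors of the $n\times(k+4)$ matrix $Z$ are positive. Here $UZ=\{uZ: u\in U\}$ and similarly for $WZ$. *)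

From HB Require Import structures.
From mathcomp Require Import all_boot all_order all_algebra.
From mathcomp Require Import all_classical all_reals all_analysis.
Set Implicit Arguments. Unset Strict Implicit. Unset Printing Implicit Defensive.
Import Order.TTheory GRing.Theory Num.Theory.
Import numFieldNormedType.Exports.
Local Open Scope classical_set_scope.
Local Open Scope ring_scope.

(* Strictly increasing maps of ordinals = subsets of columns/rows in order. *)
Definition incr (a b : nat) (f : 'I_a -> 'I_b) : Prop :=
  forall i j : 'I_a, (i < j)%N -> (f i < f j)%N.

Definition maxminors_nonneg (R : realType) (p n : nat) (A : 'M[R]_(p, n)) : Prop :=
  forall f : 'I_p -> 'I_n, incr f -> 0 <= \det (colsub f A).

Definition positive_mat (R : realType) (n m : nat) (Z : 'M[R]_(n, m)) : Prop :=
  forall f : 'I_m -> 'I_n, incr f -> 0 < \det (rowsub f Z).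

(* A point of Gr_{k,n;1} is represented by the (2+k) x n matrix [D;C] = col_mx D C
   of full rank 2+k (then C has full rank k); U = rowspan C, W = rowspan [D;C]. *)
Definition flag_rep (R : realType) (k n : nat) (M : 'M[R]_(2 + k, n)) : Prop :=
  \rank M = (2 + k)%N.

(* Two representatives define the same flag iff they differ by left multiplication
   by an invertible g whose lower-left k x 2 block vanishes (the parabolic group P). *)
Definition parabolic (R : realType) (k : nat) (g : 'M[R]_(2 + k)) : Prop :=
  dlsubmx g = 0.

(* Gr^{>=}_{k,n;1}, on representatives: some representative (C;D) has all maximal
   minors of C and of [D;C] nonnegative. *)
Definition nonneg_rep (R : realType) (k n : nat) (M : 'M[R]_(2 + k, n)) : Prop :=
  flag_rep M /\ maxminors_nonneg (dsubmx M) /\ maxminors_nonneg M.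

(* Subsets of Gr_{k,n;1} correspond to P-invariant sets of representatives;
   such a set is open in Gr (quotient topology) iff it is open in the space of
   matrices. *)
Definition P_invariant (R : realType) (k n : nat) (S : set 'M[R]_(2 + k, n)) : Prop :=
  forall M g, S M -> g \in unitmx -> parabolic g -> S (g *m M).

From HB Require Import structures.
From mathcomp Require Import all_boot all_order all_algebra all_fingroup.
From mathcomp Require Import all_classical all_reals all_analysis.
Set Implicit Arguments. Unset Strict Implicit. Unset Printing Implicit Defensive.
Import Order.TTheory GRing.Theory Num.Theory.
Import numFieldNormedType.Exports.
Local Open Scope ring_scope.

(* By Cauchy-Binet, det (N Z) is a sum of products of maximal minors of N and of Z.
   A full-rank (k+2) x n matrix M with nonnegative maximal minors can be extended, one
   row at a time, to a full-rank (k+4) x n matrix with the same property, whose product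
   with the positive matrix Z therefore has positive determinant; hence MZ has rank
   k+2. So the set B of representatives M such that MZ has a nonzero maximal minor is
   open, invariant under the parabolic group, contains the nonnegative part and maps to
   Gr_{k,k+4;1}. As Z has a left inverse, M |-> MZ is a surjective linear map, so the
   submersion condition holds already with g = 0. *)

Definition increasing q n (f : 'I_q -> 'I_n) : bool :=
  [forall i : 'I_q, forall j : 'I_q, (i < j)%N ==> (f i < f j)%N].

Lemma increasingP q n (f : 'I_q -> 'I_n) : reflect (incr f) (increasing f).
Proof.
apply: (iffP forallP) => [H i j | H i]; first by move/forallP/(_ j)/implyP: (H i).
by apply/forallP => j; apply/implyP/H.
Qed.

Lemma card_ord_ltn n b : (b <= n)%N -> #|[set c : 'I_n | (c < b)%N]| = b.
Proof.
move=> bn; have -> : [set c : 'I_n | (c < b)%N] = widen_ord bn @: [set: 'I_b].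
  apply/setP => c; rewrite inE; apply/idP/imsetP => [c_lt | [c' _ ->]].
    by exists (Ordinal c_lt) => //; apply: val_inj.
  exact: (ltn_ord c').
by rewrite card_imset ?cardsT ?card_ord // => i j /(congr1 val) /= /val_inj.
Qed.

Section IncreasingMaps.
Variables q n : nat.
Implicit Types f g : 'I_q -> 'I_n.

Lemma incr_inj f : incr f -> injective f.
Proof.
move=> fi i j e; apply/val_inj/eqP; case: (ltngtP i j) => // /fi; by rewrite e ltnn.
Qed.

Lemma incr_sorted f : incr f -> sorted (relpre val ltn) (map f (enum 'I_q)).
Proof.
move=> fi; rewrite sorted_map; apply: (@sub_sorted _ (relpre val ltn)) => [a b /fi //|].
by have := iota_ltn_sorted 0 q; rewrite -val_enum_ord sorted_map.
Qed.

Lemma incr_eq_perm f g (s t : 'S_q) :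
  incr f -> incr g -> f \o s =1 g \o t -> f =1 g.
Proof.
move=> fi gi fg i.
have eq_map : map f (enum 'I_q) = map g (enum 'I_q).
  apply: (irr_sorted_eq (leT := relpre val ltn)) (incr_sorted fi) (incr_sorted gi) _.
  - by move=> a b c /=; apply: ltn_trans.
  - by move=> a /=; rewrite ltnn.
  move=> x; apply/mapP/mapP => -[j _ ->].
    by exists (t (s^-1 j))%g; rewrite ?mem_enum // -[in LHS](permKV s j); apply: fg.
  exists (s (t^-1 j))%g; rewrite ?mem_enum // -[in LHS](permKV t j).
  by symmetry; apply: fg.
have := congr1 (nth (f i) ^~ i) eq_map.
by rewrite !(nth_map i) -?enumT ?size_enum_ord // nth_ord_enum.
Qed.

Lemma sorted_enum_set (S : {set 'I_n}) : sorted (relpre val ltn) (enum S).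
Proof.
rewrite /enum_mem -enumT; apply: sorted_filter; first by move=> a b c /=; apply: ltn_trans.
by have := iota_ltn_sorted 0 n; rewrite -val_enum_ord sorted_map.
Qed.

Lemma injective_incr_perm (phi : 'I_q -> 'I_n) : injective phi ->
  exists f, exists s : 'S_q, incr f /\ phi =1 f \o s.
Proof.
move=> phi_inj; set e := enum (phi @: [set: 'I_q]).
have size_e : size e = q by rewrite -cardE card_imset // cardsT card_ord.
have phi_e i : phi i \in e by rewrite mem_enum imset_f.
have index_lt i : (index (phi i) e < q)%N by rewrite -size_e index_mem.
pose f i := nth (phi i) e i.
have fE j : f (Ordinal (index_lt j)) = phi j by rewrite /f /= nth_index.
have s_inj : injective (fun i => Ordinal (index_lt i)).
  by move=> i j /(congr1 f); rewrite !fE => /phi_inj.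
exists f, (perm s_inj); split; last by move=> i; rewrite /= permE fE.
move=> i j lt_ij; rewrite /f (set_nth_default (phi i) (phi j)) ?size_e //.
have ltn_tr : transitive (relpre (@nat_of_ord n) ltn) by move=> a b c; apply: ltn_trans.
apply: (sorted_ltn_nth ltn_tr _ (sorted_enum_set (phi @: [set: 'I_q]))) => //.
  by rewrite inE -/e size_e.
by rewrite inE -/e size_e.
Qed.

Lemma incr_ge f (r : 'I_q) : incr f -> (r <= f r)%N.
Proof.
move=> fi; have sub : f @: [set j : 'I_q | (j < r)%N] \subset [set c : 'I_n | (c < f r)%N].
  by apply/fintype.subsetP => x /imsetP [j]; rewrite inE => /fi lt_fj ->; rewrite inE.
have := subset_leq_card sub.
rewrite (card_imset _ (incr_inj fi)) !card_ord_ltn //; exact: ltnW.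
Qed.

Lemma incr_covered_prefix f (r : 'I_q) : incr f ->
  (forall c : 'I_n, (c < f r)%N -> exists j, f j = c) -> f r = r :> nat.
Proof.
move=> fi covered; apply/eqP; rewrite eqn_leq incr_ge // andbT.
have sub : [set c : 'I_n | (c < f r)%N] \subset f @: [set j : 'I_q | (j < r)%N].
  apply/fintype.subsetP => c; rewrite inE => lt_c; have [j fj] := covered c lt_c.
  apply/imsetP; exists j => //; rewrite inE ltnNge; apply: contraL lt_c => le_rj.
  rewrite -fj -leqNgt; move: le_rj; rewrite leq_eqVlt.
  by case/orP => [/eqP/val_inj -> | /fi/ltnW].
have := leq_trans (subset_leq_card sub) (leq_imset_card _ _).
by rewrite !card_ord_ltn //; apply: ltnW.
Qed.

End IncreasingMaps.

Lemma incr_lift m n (f : 'I_m -> 'I_n) (r : 'I_m) : incr f -> incr (f \o lift r).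
Proof. by move=> fi i j lt_ij; apply: fi; rewrite /= ltnNge leq_bump2 -ltnNge. Qed.

Section CauchyBinet.
Variable R : comPzRingType.
Variables q n : nat.
Implicit Types (A : 'M[R]_(q, n)) (B : 'M[R]_(n, q)).

Lemma det_mulmx_expand A B : \det (A *m B) =
  \sum_(phi : {ffun 'I_q -> 'I_n}) (\prod_i A i (phi i)) * \det (rowsub phi B).
Proof.
transitivity (\sum_(s : 'S_q) (-1) ^+ s * \sum_(phi : {ffun 'I_q -> 'I_n})
     \prod_i (A i (phi i) * B (phi i) (s i))).
  apply: eq_bigr => s _; congr (_ * _).
  rewrite -(bigA_distr_bigA (fun i j => A i j * B j (s i))) /=.
  by apply: eq_bigr => i _; rewrite mxE.
under eq_bigr do rewrite big_distrr /=.
rewrite exchange_big /=; apply: eq_bigr => phi _.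
rewrite /(\det _) big_distrr /=; apply: eq_bigr => s _.
rewrite big_split /= mulrCA; congr (_ * (_ * _)).
by apply: eq_bigr => i _; rewrite mxE.
Qed.

Lemma det_rowsub_perm (f : 'I_q -> 'I_n) (s : 'S_q) B :
  \det (rowsub (f \o s) B) = (-1) ^+ s * \det (rowsub f B).
Proof.
have -> : rowsub (f \o s) B = row_perm s (rowsub f B) by apply/matrixP => i j; rewrite !mxE.
by rewrite row_permE det_mulmx det_perm.
Qed.

Lemma det_colsub_mul_rowsub (f : 'I_q -> 'I_n) A B :
  \det (colsub f A) * \det (rowsub f B) =
  \sum_(s : 'S_q) (\prod_i A i (f (s i))) * \det (rowsub (f \o s) B).
Proof.
rewrite {1}/(\det _) big_distrl; apply: eq_bigr => s _.
rewrite det_rowsub_perm mulrA; congr (_ * _).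
by rewrite mulrC; congr (_ * _); apply: eq_bigr => i _; rewrite mxE.
Qed.

Theorem cauchy_binet A B : \det (A *m B) =
  \sum_(f : {ffun 'I_q -> 'I_n} | increasing f) \det (colsub f A) * \det (rowsub f B).
Proof.
pose F (phi : 'I_q -> 'I_n) := (\prod_i A i (phi i)) * \det (rowsub phi B).
pose h (p : {ffun 'I_q -> 'I_n} * 'S_q) := [ffun i => p.1 (p.2 i)].
pose P := [set p : {ffun 'I_q -> 'I_n} * 'S_q | increasing p.1].
have h_inj : {in P &, injective h}.
  move=> [f s] [g t]; rewrite !inE => /increasingP fi /increasingP gi /ffunP /= fg.
  have eq_fg : f =1 g.
    by apply: (incr_eq_perm (s := s) (t := t) fi gi) => i; have := fg i; rewrite !ffunE.
  have -> : f = g by apply/ffunP.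
  congr (_, _); apply/permP => i; apply: (incr_inj gi).
  by have := fg i; rewrite !ffunE eq_fg.
have im_h : h @: P = [set phi : {ffun 'I_q -> 'I_n} | injectiveb phi].
  apply/setP => phi; rewrite inE; apply/imsetP/injectiveP => [[[f s]] | phi_inj].
    rewrite inE => /increasingP fi ->.
    by move=> i j; rewrite !ffunE => /(incr_inj fi) /perm_inj.
  have [f [s [fi phiE]]] := injective_incr_perm phi_inj.
  exists ([ffun i => f i], s).
    by rewrite inE; apply/increasingP => i j /fi; rewrite !ffunE.
  by apply/ffunP => i; rewrite !ffunE phiE.
rewrite det_mulmx_expand (bigID (fun phi : {ffun 'I_q -> 'I_n} => injectiveb phi)) /=.
rewrite [X in _ + X]big1 ?addr0 => [|phi /injectivePn [i [j ne_ij eq_ij]]]; last first.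
  by rewrite (determinant_alternate ne_ij) ?mulr0 // => k; rewrite !mxE eq_ij.
transitivity (\sum_(phi in h @: P) F phi); first by apply: eq_bigl => phi; rewrite im_h inE.
rewrite big_imset //; under [RHS]eq_bigr do rewrite det_colsub_mul_rowsub.
rewrite pair_big_dep /=; apply: eq_big => [p | [f s] _]; first by rewrite inE andbT.
rewrite /F /=; congr (_ * _); first by apply: eq_bigr => i _; rewrite ffunE.
by congr (\det _); apply/matrixP => i j; rewrite !mxE ffunE.
Qed.

End CauchyBinet.

Lemma det_colsub_col_mx_delta (R : comPzRingType) q n (M : 'M[R]_(q, n))
    (a : R) (b : 'I_n) (f : 'I_(1 + q) -> 'I_n) :
  \det (colsub f (col_mx (a *: delta_mx 0 b : 'rV_n) M)) =
  \sum_(r | f r == b) a * (-1) ^+ r * \det (colsub (f \o lift r) M).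
Proof.
rewrite (expand_det_row _ (lshift q 0)) (bigID (fun r => f r == b)) /=.
have row0 r : colsub f (col_mx (a *: delta_mx 0 b) M) (lshift q 0) r = a * (f r == b)%:R.
  by rewrite mxE col_mxEu !mxE eqxx.
rewrite [X in _ + X]big1 ?addr0 => [|r /negbTE frb]; last by rewrite row0 frb mulr0 mul0r.
apply: eq_bigr => r /eqP frb; rewrite row0 frb eqxx mulr1 /cofactor -mulrA.
congr (_ * (_ * \det _)); apply/matrixP => i j.
rewrite 3!mxE (_ : lift (lshift q 0) i = rshift 1 i) ?col_mxEd ?mxE //.
exact: val_inj.
Qed.

Lemma minor_neq0_rank (F : fieldType) p n (N : 'M[F]_(p, n)) (f : 'I_p -> 'I_n) :
  \det (colsub f N) != 0 -> \rank N = p.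
Proof.
rewrite -unitfE -unitmxE => /mxrank_unit rank_minor.
apply/eqP; rewrite eqn_leq rank_leq_row -{1}rank_minor.
by rewrite -[N in colsub f N]mulmx1 -mulmx_colsub mxrankM_maxl.
Qed.

Lemma exists_nonzero_maxminor (F : fieldType) q n (M : 'M[F]_(q, n)) :
  \rank M = q -> exists2 f : {ffun 'I_q -> 'I_n}, increasing f & \det (colsub f M) != 0.
Proof.
move=> rank_M; have : row_full M^T by rewrite /row_full mxrank_tr rank_M.
case/row_fullP => X /(congr1 trmx); rewrite trmx_mul trmxK trmx1 => MX.
have := cauchy_binet M X^T; rewrite MX det1.
pose good := [pred f : {ffun 'I_q -> 'I_n} | increasing f && (\det (colsub f M) != 0)].
have [f /andP [fi nz] _ | all0] := pickP good; first by exists f.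
rewrite big1 => [|f fi]; first by move/eqP; rewrite oner_eq0.
by have := all0 f; rewrite /= fi => /negbFE/eqP ->; rewrite mul0r.
Qed.

Section Extension.
Variable R : realType.
Variables (q n : nat) (M : 'M[R]_(q, n)) (b : 'I_n).
Hypothesis M_nonneg : maxminors_nonneg M.
Hypothesis b_avoided :
  exists2 g : 'I_q -> 'I_n, \det (colsub g M) != 0 & forall i, g i != b.
Hypothesis b_min : forall g : 'I_q -> 'I_n, incr g -> \det (colsub g M) != 0 ->
  forall c : 'I_n, (c < b)%N -> exists i, g i = c.

(* The new row is +-e_b, where b is the first column avoided by a nonzero maximal
   minor of M.  Minimality of b forces every nonzero maximal minor of [e; M] to use
   column b in position b, so that the sign (-1)^b makes all of them nonnegative. *)
Let e : 'rV[R]_n := (-1) ^+ b *: delta_mx 0 b.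

Lemma pivot_column (f : 'I_(1 + q) -> 'I_n) (r : 'I_(1 + q)) :
  incr f -> f r = b -> \det (colsub (f \o lift r) M) != 0 -> r = b :> nat.
Proof.
move=> fi frb nz; rewrite -frb; symmetry; apply: incr_covered_prefix => // c.
by rewrite frb => /(b_min (incr_lift r fi) nz) [i <-]; exists (lift r i).
Qed.

Lemma extension_nonneg : maxminors_nonneg (col_mx e M).
Proof.
move=> f fi; rewrite /e det_colsub_col_mx_delta; apply: sumr_ge0 => r /eqP frb.
have [-> | nz] := eqVneq (\det (colsub (f \o lift r) M)) 0; first by rewrite mulr0.
rewrite -exprD (pivot_column fi frb nz) -signr_odd addnn odd_double mul1r.
exact: M_nonneg (incr_lift r fi).
Qed.

Lemma extension_rank : \rank (col_mx e M) = q.+1.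
Proof.
have [g nz gb] := b_avoided.
pose f (j : 'I_(1 + q)) := if unlift ord0 j is Some i then g i else b.
apply: (@minor_neq0_rank _ _ _ _ f); rewrite /e det_colsub_col_mx_delta (big_pred1 ord0).
  have -> : colsub (f \o lift ord0) M = colsub g M.
    by apply/matrixP => i j; rewrite !mxE /f /= liftK.
  by rewrite !mulf_neq0 ?signr_eq0.
move=> j; rewrite /f; case: unliftP => [i -> | ->]; last by rewrite /= eqxx.
by rewrite /= (negbTE (gb i)) lift_eqF.
Qed.

End Extension.

Lemma mxrank_col_mx_le (F : fieldType) m1 m2 p (A : 'M[F]_(m1, p)) (B : 'M[F]_(m2, p)) :
  (\rank (col_mx A B) <= \rank A + \rank B)%N.
Proof. by rewrite -addsmxE; exact: (mxrank_adds_leqif A B).1. Qed.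

Section PositiveImage.
Variable R : realType.

Lemma det_mulmx_gt0 q n (N : 'M[R]_(q, n)) (Z : 'M[R]_(n, q)) :
  maxminors_nonneg N -> \rank N = q -> positive_mat Z -> 0 < \det (N *m Z).
Proof.
move=> N_nonneg rank_N Z_pos; have [f0 f0i nz] := exists_nonzero_maxminor rank_N.
have minor_nonneg f : increasing f -> 0 <= \det (colsub f N) * \det (rowsub f Z).
  by move/increasingP => fi; rewrite mulr_ge0 ?N_nonneg ?ltW ?Z_pos.
rewrite cauchy_binet (bigD1 f0) //=; apply: ltr_wpDr.
  by apply: sumr_ge0 => f /andP [fi _]; apply: minor_nonneg.
rewrite lt_def mulf_neq0 ?nz ?lt0r_neq0 ?Z_pos ?minor_nonneg //; exact/increasingP.
Qed.

Lemma maxminors_nonneg_extend q n (M : 'M[R]_(q, n)) :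
  (q < n)%N -> maxminors_nonneg M -> \rank M = q ->
  exists e : 'rV[R]_n, maxminors_nonneg (col_mx e M) /\ \rank (col_mx e M) = q.+1.
Proof.
move=> lt_qn M_nonneg rank_M.
pose avoidable (c : nat) := `[< exists g : 'I_q -> 'I_n,
  [/\ incr g, \det (colsub g M) != 0 & forall i, g i != c :> nat] >].
have [c avoid_c] : exists c : 'I_n, avoidable c.
  have [f0 /increasingP f0i nz0] := exists_nonzero_maxminor rank_M.
  have : ~~ ([set: 'I_n] \subset f0 @: [set: 'I_q]).
    apply/negP => /subset_leq_card /leq_trans /(_ (leq_imset_card _ _)).
    by rewrite !cardsT !card_ord leqNgt lt_qn.
  case/subsetPn => c _ c_out; exists c; apply/asboolP; exists f0; split => // i.
  by apply: contraNneq c_out => /val_inj <-; apply: imset_f.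
have [b avoid_b b_min] := ex_minnP (ex_intro avoidable (val c) avoid_c).
have lt_bn : (b < n)%N := leq_ltn_trans (b_min c avoid_c) (ltn_ord c).
pose bo := Ordinal lt_bn.
exists ((-1) ^+ bo *: delta_mx 0 bo); split.
  apply: extension_nonneg => // g gi nz c' lt_c'.
  have [i /eqP gc | none] := pickP (fun i => g i == c'); first by exists i.
  have /b_min : avoidable c'.
    by apply/asboolP; exists g; split => // i; apply: contraFneq (none i) => /val_inj ->.
  by rewrite leqNgt lt_c'.
have [g [_ nz gb]] := asboolP _ avoid_b.
by apply: extension_rank; exists g => // i; apply: contraNneq (gb i) => ->.
Qed.

Lemma rank_mulmx_positive q n (M : 'M[R]_(q, n)) (Z : 'M[R]_(n, q.+2)) :
  (q.+2 <= n)%N -> maxminors_nonneg M -> \rank M = q -> positive_mat Z ->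
  \rank (M *m Z) = q.
Proof.
move=> le_n M_nonneg rank_M Z_pos.
have [e1 [M1_nonneg rank_M1]] := maxminors_nonneg_extend (ltnW le_n) M_nonneg rank_M.
have [e2 [M2_nonneg rank_M2]] := maxminors_nonneg_extend le_n M1_nonneg rank_M1.
have M2Z_unit : col_mx e2 (col_mx e1 M) *m Z \in unitmx.
  by rewrite unitmxE unitfE lt0r_neq0 // det_mulmx_gt0.
have := mxrank_unit M2Z_unit; rewrite !mul_col_mx => rank_M2Z.
apply/eqP; rewrite eqn_leq rank_leq_row -(leq_add2l 2) -[X in (X <= _)%N]rank_M2Z.
apply: leq_trans (mxrank_col_mx_le _ _) _; apply: leq_add (rank_leq_row _) _.
by apply: leq_trans (mxrank_col_mx_le _ _) _; apply: leq_add (rank_leq_row _) _.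
Qed.

Lemma positive_mat_left_inverse n m (Z : 'M[R]_(n, m)) :
  (m <= n)%N -> positive_mat Z -> exists L : 'M[R]_(m, n), L *m Z = 1%:M.
Proof.
move=> le_mn Z_pos; pose w (i : 'I_m) := widen_ord le_mn i.
have w_unit : rowsub w Z \in unitmx.
  by rewrite unitmxE unitfE lt0r_neq0 // Z_pos.
by exists (invmx (rowsub w Z) *m rowsub w 1%:M); rewrite -mulmxA -rowsubE mulVmx.
Qed.

End PositiveImage.

Local Open Scope classical_set_scope.

Section Continuity.
Variable R : realType.

Lemma continuous_mx (T : topologicalType) m n (f : T -> 'M[R]_(m, n)) :
  (forall i j, continuous (fun x => f x i j)) -> continuous f.
Proof.
move=> f_cont x A [P P_nbhs PA]; apply: (filterS (fun y Py => PA (f y) Py)).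
by apply: filter_forall => i; apply: filter_forall => j; apply: f_cont.
Qed.

Lemma continuous_mulmxr p n m (W : 'M[R]_(n, m)) :
  continuous (fun N : 'M[R]_(p, n) => N *m W).
Proof.
apply: continuous_mx => i j; under eq_fun do rewrite mxE.
apply: (@continuous_big R _ +%R 0 xpredT) => [|l _ N]; first exact: add_continuous.
by apply: continuousM; [exact: coord_continuous | exact: cst_continuous].
Qed.

Lemma continuous_det m : continuous (fun A : 'M[R]_m => \det A).
Proof.
apply: (@continuous_big R _ +%R 0 xpredT) => [|s _ A]; first exact: add_continuous.
change {for A, continuous (fun A : 'M[R]_m => (-1) ^+ s * \prod_i A i (s i))}.
apply: continuousM; first exact: cst_continuous.
apply: (@continuous_big R _ *%R 1 xpredT) => [|i _]; first exact: mul_continuous.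
exact: coord_continuous.
Qed.

Lemma open_det_mulmx_neq0 p n (W : 'M[R]_(n, p)) :
  open [set N : 'M[R]_(p, n) | \det (N *m W) != 0].
Proof.
apply: (@open_comp _ _ (fun N : 'M[R]_(p, n) => \det (N *m W)) [set x : R | x != 0]).
  move=> N _; apply: (@continuous_comp _ _ _ (mulmxr W) (fun A => \det A)).
    exact: continuous_mulmxr.
  exact: continuous_det.
exact: open_neq.
Qed.

End Continuity.

Theorem mainTheorem3 (R : realType) (k n : nat) (hn : (k + 4 <= n)%N)
    (Z : 'M[R]_(n, k + 4)) (hZ : positive_mat Z) :
  exists B : set 'M[R]_(2 + k, n),
    [/\ (* B is a subset of Gr_{k,n;1}, open, given by a P-invariant set *)
        [/\ B `<=` [set M | flag_rep M], open B & P_invariant B],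
        (* B contains Gr^{>=}_{k,n;1} *)
        [set M | nonneg_rep M] `<=` B,
        (* (U,W) |-> (UZ,WZ) is well defined B -> Gr_{k,k+4;1} *)
        (forall M, B M -> flag_rep (M *m Z)) &
        (* submersion: at every point the differential of the lifted map
           M |-> MZ, together with the tangent space of the P-orbit of MZ,
           spans the whole tangent space of the representative space *)
        (forall M, B M ->
           differentiable (fun N : 'M[R]_(2 + k, n) => N *m Z) M /\
           forall Y : 'M[R]_(2 + k, k + 4), exists (X : 'M[R]_(2 + k, n))
             (g : 'M[R]_(2 + k)), parabolic g /\
             Y = 'd (fun N : 'M[R]_(2 + k, n) => N *m Z) M X + g *m (M *m Z))].
Proof.
have e4 : (k + 4 = (2 + k).+2)%N by rewrite addnC.
rewrite e4 in hn; move: Z hZ; rewrite e4 => Z hZ.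
pose B := \bigcup_(f : 'I_(2 + k) -> 'I_(2 + k).+2)
  [set M : 'M[R]_(2 + k, n) | \det (M *m colsub f Z) != 0].
have B_rank M : B M -> \rank (M *m Z) = (2 + k)%N.
  by case=> f _ /=; rewrite mulmx_colsub => /minor_neq0_rank.
have [L LZ] := positive_mat_left_inverse hn hZ.
exists B; split.
- split.
  + move=> M /B_rank rank_MZ; apply/eqP.
    by rewrite eqn_leq rank_leq_row -{1}rank_MZ mxrankM_maxl.
  + by apply: bigcup_open => f _; apply: open_det_mulmx_neq0.
  + move=> M g [f _ nz] g_unit _; exists f => //=.
    by rewrite -mulmxA det_mulmx mulf_neq0 // -unitfE -unitmxE.
- move=> M [M_rank [_ M_nonneg]].
  have [f _ nz] := exists_nonzero_maxminor (rank_mulmx_positive hn M_nonneg M_rank hZ).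
  by exists f => //=; rewrite mulmx_colsub.
- exact: B_rank.
- move=> M _; have lin : (fun N : 'M[R]_(2 + k, n) => N *m Z) = mulmxr Z by [].
  rewrite lin; split; first exact/linear_differentiable/continuous_mulmxr.
  move=> Y; exists (Y *m L), 0; split; first by apply/matrixP => i j; rewrite !mxE.
  rewrite diff_lin /=; last exact: continuous_mulmxr.
  by rewrite -mulmxA LZ mulmx1 mul0mx addr0.
Qed.
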